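(* Let $G$ be a directed multigraph on $[n+1]$ with edges $i\to j$ for $i<j$, and for $i=1,\ldots,n$ let $P_i=\mathcal{F}_G(e_i-e_{n+1})\subset\mathbb{R}^{E(G)}$. Let $G^\star$ be the graph on $\{0,1,\ldots,n+1\}$ obtained from $G$ by adding vertex $0$ and edges $(0,i)$, $i=1,\ldots,n$, and identify $\mathbb{R}^n\times\mathbb{R}^{E(G)}$ with $\mathbb{R}^{E(G^\star)}$ by letting the $i$-th coordinate of $\mathbb{R}^n$ correspond to the edge $(0,i)$. Then the Cayley embedding $\mathcal{C}(P_1,\ldots,P_n)$ equals the flow polytope $\mathcal{F}_{G^\star}(e_0-e_{n+1})$, i.e. the flow polytope of $G^\star$ with netflow $1$ at vertex $0$, $-1$ at vertex $n+1$ and $0$ elsewhere.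
   Context: $\mathcal{F}_H({\bf v})$ is the set of $f\in\mathbb{R}_{\ge0}^{E(H)}$ with outflow minus inflow at each vertex $k$ equal to $v_k$; $e_i-e_{n+1}$ is the netflow $1$ at vertex $i$, $-1$ at $n+1$, $0$ elsewhere. The Cayley embedding of polytopes $P_1,\ldots,P_n\subset\mathbb{R}^N$ is $\mathcal{C}(P_1,\ldots,P_n)=\mathrm{conv}\big(\bigcup_{i=1}^n \{{\sf e}_i\}\times P_i\big)\subset\mathbb{R}^n\times\mathbb{R}^N$, where ${\sf e}_1,\ldots,{\sf e}_n$ is the standard basis of $\mathbb{R}^n$. *)

From HB Require Import structures.
From mathcomp Require Import all_boot all_order all_algebra.
Set Implicit Arguments. Unset Strict Implicit. Unset Printing Implicit Defensive.
Import Order.TTheory GRing.Theory Num.Theory.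
Local Open Scope ring_scope.

(* A directed multigraph is given by a finite edge type [E] and maps
   [src tgt : E -> nat] (tail and head of each edge); vertices are naturals. *)
Definition flow_polytope (R : realFieldType) (E : finType) (V : pred nat)
  (src tgt : E -> nat) (v : nat -> R) : (E -> R) -> Prop :=
  fun f => (forall e, 0 <= f e) /\
    (forall k, V k ->
       \sum_(e | src e == k) f e - \sum_(e | tgt e == k) f e = v k).

Definition netflow (R : realFieldType) (i j : nat) : nat -> R :=
  fun k => (k == i)%:R - (k == j)%:R.

Definition std_basis (R : realFieldType) (n : nat) (i : 'I_n) : 'I_n -> R :=
  fun j => (j == i)%:R.

(* Cayley embedding C(P_1,...,P_n) = conv (U_i {e_i} x P_i) in R^n x R^E,
   the convex hull given as the set of finite convex combinations. *)
Definition cayley_embedding (R : realFieldType) (n : nat) (E : finType)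
  (P : 'I_n -> (E -> R) -> Prop) : ('I_n -> R) * (E -> R) -> Prop :=
  fun xf => exists (m : nat) (lam : 'I_m -> R) (idx : 'I_m -> 'I_n)
                   (p : 'I_m -> E -> R),
    (forall j, 0 <= lam j) /\ \sum_(j < m) lam j = 1 /\
    (forall j, P (idx j) (p j)) /\
    (forall i, xf.1 i = \sum_(j < m) lam j * std_basis R (idx j) i) /\
    (forall e, xf.2 e = \sum_(j < m) lam j * p j e).

(* G^star: edge type E + 'I_n, edge inr i = (0, i+1). *)
Definition star_src (n : nat) (E : Type) (src : E -> nat) (e : E + 'I_n) : nat :=
  match e with inl e' => src e' | inr _ => 0%N end.
Definition star_tgt (n : nat) (E : Type) (tgt : E -> nat) (e : E + 'I_n) : nat :=
  match e with inl e' => tgt e' | inr i => (nat_of_ord i).+1 end.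

Definition star_coords (R : Type) (n : nat) (E : Type)
  (xf : ('I_n -> R) * (E -> R)) : E + 'I_n -> R :=
  fun e => match e with inl e' => xf.2 e' | inr i => xf.1 i end.

From HB Require Import structures.
From mathcomp Require Import all_boot all_order all_algebra.
From mathcomp Require Import ring lra zify.
Set Implicit Arguments. Unset Strict Implicit. Unset Printing Implicit Defensive.
Import Order.TTheory GRing.Theory Num.Theory.
Local Open Scope ring_scope.

(* Write a point of R^n x R^E(G) as (x, g). By flow conservation, (x, g) lies
   in F_{G*}(e_0 - e_{n+1}) iff x >= 0, g >= 0, sum_i x_i = 1 and the net
   outflow of g at each vertex i <= n is x_i. A point of the Cayley embedding
   sum_j lam_j (e_{i_j}, p_j) has this property by linearity. Conversely, such
   a g is decomposed as sum_i x_i p_i with p_i a unit flow from i to n+1 by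
   peeling vertices in increasing order: if no flow enters vertex v, the flow w
   leaving v has value x_v; pushing w into the supplies of its heads and
   decomposing the remainder recursively, p_v is w continued along the
   decompositions at its heads, divided by x_v. *)

Lemma sumr_delta (R : pzSemiRingType) (I : finType) (j : I) (F : I -> R) :
  \sum_i (i == j)%:R * F i = F j.
Proof.
by under eq_bigr do rewrite mulr_natl mulrb; rewrite -big_mkcond big_pred1_eq.
Qed.

Definition divergence (R : zmodType) (E : finType) (src tgt : E -> nat)
    (h : E -> R) (k : nat) : R :=
  \sum_(e | src e == k) h e - \sum_(e | tgt e == k) h e.

Lemma flow_polytopeE (R : realFieldType) (E : finType) (V : pred nat)
    (src tgt : E -> nat) (v : nat -> R) (f : E -> R) :
  flow_polytope V src tgt v f <->
  (forall e, 0 <= f e) /\ (forall k, V k -> divergence src tgt f k = v k).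
Proof. by []. Qed.

Section Divergence.
Variables (R : realFieldType) (E : finType) (src tgt : E -> nat).
Implicit Types h : E -> R.

Lemma divergenceE h u :
  divergence src tgt h u = \sum_e h e * netflow R (src e) (tgt e) u.
Proof.
rewrite /divergence !(big_mkcond (fun e => _ == u)) -sumrB.
by apply: eq_bigr => e _; rewrite /netflow mulrBr !mulr_natr !mulrb !(eq_sym u).
Qed.

Lemma eq_divergence (h1 h2 : E -> R) u :
  (forall e, h1 e = h2 e) -> divergence src tgt h1 u = divergence src tgt h2 u.
Proof.
by move=> eq_h; rewrite !divergenceE; apply: eq_bigr => e _; rewrite eq_h.
Qed.

Lemma divergenceD (h1 h2 : E -> R) u :
  divergence src tgt (fun e => h1 e + h2 e) u =
  divergence src tgt h1 u + divergence src tgt h2 u.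
Proof.
by rewrite !divergenceE -big_split; apply: eq_bigr => e _; rewrite mulrDl.
Qed.

Lemma divergenceZ c h u :
  divergence src tgt (fun e => c * h e) u = c * divergence src tgt h u.
Proof.
by rewrite !divergenceE mulr_sumr; apply: eq_bigr => e _; rewrite mulrA.
Qed.

Lemma divergence_lincomb (I : finType) (c : I -> R) (h : I -> E -> R) u :
  divergence src tgt (fun e => \sum_i c i * h i e) u =
  \sum_i c i * divergence src tgt (h i) u.
Proof.
rewrite divergenceE; under eq_bigr do rewrite mulr_suml.
rewrite exchange_big; apply: eq_bigr => i _.
by rewrite divergenceE mulr_sumr; apply: eq_bigr => e _; rewrite mulrA.
Qed.

Lemma star_divergence n (xf : ('I_n -> R) * (E -> R)) u :
  divergence (star_src src) (star_tgt tgt) (star_coords xf) u =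
  divergence src tgt xf.2 u + \sum_i xf.1 i * netflow R 0 i.+1 u.
Proof.
have -> : \sum_i xf.1 i * netflow R 0 i.+1 u =
          \sum_(i < n | 0%N == u) xf.1 i - \sum_(i < n | i.+1 == u) xf.1 i.
  rewrite !(big_mkcond (fun i => _ == u)) -sumrB; apply: eq_bigr => i _.
  by rewrite /netflow mulrBr !mulr_natr !mulrb !(eq_sym u).
rewrite /divergence !big_sumType /=; ring.
Qed.

End Divergence.

Lemma cayley_embedding_convex (R : realFieldType) (n : nat) (E : finType)
    (P : 'I_n -> (E -> R) -> Prop) (xf : ('I_n -> R) * (E -> R))
    (p : 'I_n -> E -> R) :
  (forall i, 0 <= xf.1 i) -> \sum_i xf.1 i = 1 ->
  (forall i, 0 < xf.1 i -> P i (p i)) ->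
  (forall e, xf.2 e = \sum_i xf.1 i * p i e) ->
  cayley_embedding P xf.
Proof.
move=> x_ge0 sum_x1 Pp xf2E.
have [i0 x_i0_gt0] : exists i0, 0 < xf.1 i0.
  apply/existsP; apply: contraT; rewrite negb_exists => /forallP x_le0.
  have : \sum_i xf.1 i = 0.
    by apply: big1 => i _; apply/eqP; rewrite eq_le x_ge0 andbT leNgt x_le0.
  by rewrite sum_x1 => /eqP; rewrite oner_eq0.
(* Indices carrying zero weight are redirected to [i0], where [P] holds. *)
pose idx j := if 0 < xf.1 j then j else i0.
have idxK (F : 'I_n -> R) j : xf.1 j * F (idx j) = xf.1 j * F j.
  rewrite /idx; case: ifP => // x_j_le0.
  suff -> : xf.1 j = 0 by rewrite !mul0r.
  by apply/eqP; rewrite eq_le x_ge0 andbT leNgt x_j_le0.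
exists n, xf.1, idx, (fun j => p (idx j)); split=> //; split=> //; split.
  by move=> j; rewrite /idx; case: ifP => [/Pp // | _]; apply: Pp.
split=> [i | e]; last first.
  by rewrite xf2E; apply: eq_bigr => j _; rewrite (idxK (p^~ e)).
rewrite -[LHS](sumr_delta i xf.1); apply: eq_bigr => j _.
by rewrite (idxK (fun l => std_basis R l i)) /std_basis mulrC eq_sym.
Qed.

Section Flows.
Variables (R : realFieldType) (n : nat) (E : finType) (src tgt : E -> nat).
Hypothesis src_gt0 : forall e, (0 < src e)%N.
Hypothesis src_lt_tgt : forall e, (src e < tgt e)%N.
Hypothesis tgt_le : forall e, (tgt e <= n.+1)%N.
Implicit Types (h g : E -> R) (x : 'I_n -> R).

Local Notation dvg := (divergence src tgt).

Lemma edge_range e : (0 < src e <= n.+1)%N && (0 < tgt e <= n.+1)%N.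
Proof. by have := src_gt0 e; have := src_lt_tgt e; have := tgt_le e; lia. Qed.

Definition supply x (u : nat) : R := \sum_i x i * netflow R i.+1 n.+1 u.

Lemma supply0 x : supply x 0 = 0.
Proof. by rewrite /supply big1 // => i _; rewrite /netflow subrr mulr0. Qed.

Lemma supply_succ x (j : 'I_n) : supply x j.+1 = x j.
Proof.
rewrite /supply /netflow eqSS (ltn_eqF (ltn_ord j)).
by under eq_bigr do rewrite subr0 eqSS mulrC eq_sym; rewrite sumr_delta.
Qed.

Lemma supplyB x1 x2 u :
  supply (fun i => x1 i - x2 i) u = supply x1 u - supply x2 u.
Proof. by rewrite /supply -sumrB; apply: eq_bigr => i _; rewrite mulrBl. Qed.

Lemma supply_vertex t u : (0 < t <= n.+1)%N ->
  supply (fun i => (i.+1 == t)%:R) u = netflow R t n.+1 u.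
Proof.
case/andP=> t_gt0; rewrite leq_eqVlt ltnS => /orP[/eqP -> | t_le_n].
  rewrite /supply {2}/netflow subrr big1 // => i _.
  by rewrite eqSS (ltn_eqF (ltn_ord i)) mul0r.
have [j ->] : exists j : 'I_n, t = j.+1.
  have t_pred_lt : (t.-1 < n)%N by rewrite prednK.
  by exists (Ordinal t_pred_lt); rewrite /= prednK.
by rewrite /supply; under eq_bigr do rewrite eqSS; rewrite sumr_delta.
Qed.

Lemma netflow_supply s t u : (0 < s <= n.+1)%N -> (0 < t <= n.+1)%N ->
  netflow R s t u = supply (fun i => netflow R s t i.+1) u.
Proof.
move=> s_in t_in.
rewrite (supplyB (fun i => (i.+1 == s)%:R) (fun i => (i.+1 == t)%:R)).
by rewrite !supply_vertex // /netflow; ring.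
Qed.

Lemma divergence_supply h u : dvg h u = supply (fun i => dvg h i.+1) u.
Proof.
transitivity (\sum_e h e * supply (fun i => netflow R (src e) (tgt e) i.+1) u).
  rewrite divergenceE; apply: eq_bigr => e _.
  by case/andP: (edge_range e) => src_in tgt_in; rewrite -netflow_supply.
rewrite /supply; under eq_bigr do rewrite mulr_sumr.
rewrite exchange_big; apply: eq_bigr => i _.
by rewrite divergenceE mulr_suml; apply: eq_bigr => e _; rewrite mulrA.
Qed.

Definition unit_flow (i : 'I_n) (p : E -> R) : Prop :=
  (forall e, 0 <= p e) /\ forall j : 'I_n, dvg p j.+1 = (j == i)%:R.

Lemma flow_polytope_unit_flowP (i : 'I_n) p :
  flow_polytope (fun k => (0 < k <= n.+1)%N) src tgt (netflow R i.+1 n.+1) p <->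
  unit_flow i p.
Proof.
rewrite flow_polytopeE; split=> -[p_ge0 dvg_p]; split=> //.
  move=> j; rewrite [LHS](dvg_p j.+1); last exact: ltnW (ltn_ord j).
  by rewrite /netflow !eqSS (ltn_eqF (ltn_ord j)) subr0.
move=> u _; rewrite [LHS]divergence_supply /supply.
by under eq_bigr do rewrite dvg_p; rewrite sumr_delta.
Qed.

Lemma star_divergence_supply (xf : ('I_n -> R) * (E -> R)) u :
  divergence (star_src src) (star_tgt tgt) (star_coords xf) u =
  dvg xf.2 u - supply xf.1 u + (\sum_i xf.1 i) * netflow R 0 n.+1 u.
Proof.
rewrite star_divergence -[RHS]addrA; congr (_ + _).
rewrite addrC mulr_suml /supply -sumrB.
by apply: eq_bigr => i _; rewrite /netflow; ring.
Qed.

Lemma star_flow_polytopeP (xf : ('I_n -> R) * (E -> R)) :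
  flow_polytope (fun k => (k <= n.+1)%N) (star_src src) (star_tgt tgt)
    (netflow R 0 n.+1) (star_coords xf) <->
  [/\ forall i, 0 <= xf.1 i, forall e, 0 <= xf.2 e, \sum_i xf.1 i = 1
    & forall i : 'I_n, dvg xf.2 i.+1 = xf.1 i].
Proof.
rewrite flow_polytopeE.
split=> [[xf_ge0 dvg_star] | [x_ge0 g_ge0 sum_x1 dvg_g]].
  have sum_x1 : \sum_i xf.1 i = 1.
    have := dvg_star 0%N isT.
    rewrite star_divergence_supply divergence_supply !supply0 /netflow /=.
    by rewrite subrr add0r !subr0 mulr1.
  split=> // [i | e | i]; [exact: (xf_ge0 (inr i)) | exact: (xf_ge0 (inl e)) |].
  have := dvg_star i.+1 (ltnW (ltn_ord i)).
  by rewrite star_divergence_supply supply_succ sum_x1 mul1r; lra.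
split=> [[e | i] | u _]; [exact: g_ge0 | exact: x_ge0 |].
rewrite star_divergence_supply sum_x1 mul1r divergence_supply.
suff -> : supply (fun i => dvg xf.2 i.+1) u = supply xf.1 u.
  by rewrite subrr add0r.
by apply: eq_bigr => i _; rewrite dvg_g.
Qed.

Definition unit_flow_decomposition g (p : 'I_n -> E -> R) : Prop :=
  (forall i : 'I_n, 0 < dvg g i.+1 -> unit_flow i (p i)) /\
  (forall e, g e = \sum_(i < n) dvg g i.+1 * p i e).

Definition decomposable_above (k : nat) : Prop :=
  forall g, (forall e, 0 <= g e) -> (forall e, (src e <= k)%N -> g e = 0) ->
  (forall i : 'I_n, 0 <= dvg g i.+1) ->
  exists p : 'I_n -> E -> R, unit_flow_decomposition g p.

Lemma scaled_unit_flow c i p : 0 <= c -> (0 < c -> unit_flow i p) ->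
  (forall e, 0 <= c * p e) /\
  (forall j : 'I_n, c * dvg p j.+1 = c * (j == i)%:R).
Proof.
move=> c_ge0 c_unit; have [-> | c_neq0] := eqVneq c 0.
  by split=> *; rewrite !mul0r.
have [p_ge0 dvg_p] : unit_flow i p by apply: c_unit; rewrite lt_def c_neq0.
by split=> [e | j]; [exact: mulr_ge0 | rewrite dvg_p].
Qed.

Lemma decomposable_above_top k : (n <= k)%N -> decomposable_above k.
Proof.
move=> n_le_k g _ g_supp _.
have g0 e : g e = 0.
  apply: g_supp; rewrite -ltnS (leq_trans (src_lt_tgt e)) //.
  exact: leq_trans (tgt_le e) _.
have dvg_g0 u : dvg g u = 0 by rewrite /divergence !big1 ?subr0.
exists (fun _ _ => 0); split=> [i | e]; first by rewrite dvg_g0 ltxx.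
by rewrite g0 big1 // => i _; rewrite mulr0.
Qed.

Section Peel.
Variables (k : nat) (g : E -> R).
Hypothesis k_lt_n : (k < n)%N.
Hypothesis g_ge0 : forall e, 0 <= g e.
Hypothesis g_supp : forall e, (src e <= k)%N -> g e = 0.
Hypothesis dvg_g_ge0 : forall i : 'I_n, 0 <= dvg g i.+1.

Let v : 'I_n := Ordinal k_lt_n.
Let a := dvg g k.+1.
Let w e := if src e == k.+1 then g e else 0.
Let g' e := if src e == k.+1 then 0 else g e.
Let c (j : 'I_n) := \sum_(e | tgt e == j.+1) w e.

Let w_ge0 e : 0 <= w e.
Proof. by rewrite /w; case: ifP. Qed.

Let c_ge0 j : 0 <= c j.
Proof. by apply: sumr_ge0 => e _; apply: w_ge0. Qed.

Let peel_split e : g e = w e + g' e.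
Proof. by rewrite /w /g'; case: ifP; rewrite ?addr0 ?add0r. Qed.

(* No flow enters [k.+1], so the flow [w] leaving it has value [a]. *)
Let sum_w : \sum_e w e = a.
Proof.
rewrite /a /divergence [X in _ - X]big1 ?subr0.
  by rewrite [RHS]big_mkcond.
by move=> e /eqP tgt_e; apply: g_supp; rewrite -ltnS -tgt_e.
Qed.

Let dvg_w (j : 'I_n) : dvg w j.+1 = (j == v)%:R * a - c j.
Proof.
congr (_ - _); have [-> | j_neq_v] := eqVneq j v.
  rewrite mul1r -sum_w big_mkcond; apply: eq_bigr => e _.
  by rewrite /w /=; case: (_ == _).
rewrite /= mul0r big1 // => e /eqP src_e; rewrite /w src_e eqSS.
by case: eqP => // j_eq; case/eqP: j_neq_v; apply: val_inj.
Qed.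

Let dvg_g' (j : 'I_n) : dvg g' j.+1 = (j != v)%:R * dvg g j.+1 + c j.
Proof.
have := divergenceD src tgt w g' j.+1.
rewrite -(eq_divergence _ _ _ peel_split) dvg_w.
by have [-> | _] := eqVneq j v; rewrite /= /a; lra.
Qed.

Let g'_ge0 e : 0 <= g' e.
Proof. by rewrite /g'; case: ifP. Qed.

Let g'_supp e : (src e <= k.+1)%N -> g' e = 0.
Proof.
rewrite /g' leq_eqVlt ltnS; case: ifP => // _ /= src_le_k.
exact: g_supp.
Qed.

Let dvg_g'_ge0 (j : 'I_n) : 0 <= dvg g' j.+1.
Proof. by rewrite dvg_g' addr_ge0 ?c_ge0 // mulr_ge0. Qed.

Let c_le_dvg_g' (j : 'I_n) : c j <= dvg g' j.+1.
Proof. by rewrite dvg_g' lerDr mulr_ge0. Qed.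

Let w_eq0 : a = 0 -> forall e, w e = 0.
Proof.
move=> a0 e; apply: (psumr_eq0P (P := predT) (fun e _ => w_ge0 e)) => //.
by rewrite sum_w.
Qed.

Lemma peel_decomposition :
  decomposable_above k.+1 -> exists p, unit_flow_decomposition g p.
Proof.
move=> /(_ g' g'_ge0 g'_supp dvg_g'_ge0) [p' [p'_unit g'E]].
have c_p' j : (forall e, 0 <= c j * p' j e) /\
              (forall l : 'I_n, c j * dvg (p' j) l.+1 = c j * (l == j)%:R).
  apply: scaled_unit_flow (c_ge0 j) _ => c_gt0.
  exact/p'_unit/(lt_le_trans c_gt0 (c_le_dvg_g' j)).
(* [q] continues the flow [w] leaving [v] along the decomposition of [g']. *)
pose q e := w e + \sum_j c j * p' j e.
have aK e : a * (a^-1 * q e) = q e.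
  have [a0 | a_neq0] := eqVneq a 0; last by rewrite mulVKf.
  rewrite a0 mul0r /q w_eq0 // add0r big1 // => j _.
  by rewrite /c big1 ?mul0r // => f _; rewrite w_eq0.
exists (fun i => if i == v then fun e => a^-1 * q e else p' i); split.
  move=> i; have [-> a_gt0 | i_neq_v x_gt0] := eqVneq i v; last first.
    apply: p'_unit; apply: (lt_le_trans x_gt0).
    by rewrite dvg_g' i_neq_v mul1r lerDl c_ge0.
  split=> [e | j].
    apply: mulr_ge0; first by rewrite invr_ge0 ltW.
    by apply: addr_ge0 (w_ge0 e) (sumr_ge0 _ (fun j _ => (c_p' j).1 e)).
  rewrite divergenceZ divergenceD divergence_lincomb dvg_w.
  under eq_bigr do rewrite (c_p' _).2 mulrC eq_sym.
  by rewrite sumr_delta subrK mulrCA mulVf ?mulr1 // gt_eqF.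
move=> e; rewrite peel_split g'E [RHS](bigD1 v) //= eqxx aK /q -addrA.
congr (_ + _); under eq_bigr do rewrite dvg_g' mulrDl.
rewrite big_split /= addrC; congr (_ + _).
rewrite [RHS]big_mkcond; apply: eq_bigr => j _.
by have [-> | j_neq_v] := eqVneq j v; rewrite /= ?mul0r ?mul1r.
Qed.

End Peel.

Lemma decomposable_above_all k : decomposable_above k.
Proof.
elim: (n - k)%N {-2}k (erefl (n - k)%N) => [|d IH] {}k.
  by move/eqP; rewrite subn_eq0; apply: decomposable_above_top.
move=> nk g g_ge0 g_supp dvg_g_ge0.
have k_lt_n : (k < n)%N by rewrite -subn_gt0 nk.
apply: peel_decomposition k_lt_n g_ge0 g_supp dvg_g_ge0 _.
by apply: IH; rewrite subnS nk.
Qed.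

Lemma unit_flow_decomposition_exists g :
  (forall e, 0 <= g e) -> (forall i : 'I_n, 0 <= dvg g i.+1) ->
  exists p, unit_flow_decomposition g p.
Proof.
move=> g_ge0; apply: (@decomposable_above_all 0%N g g_ge0) => e.
by rewrite leqn0 => /eqP src_e0; have := src_gt0 e; rewrite src_e0.
Qed.

Lemma cayley_embedding_unit_flows (xf : ('I_n -> R) * (E -> R)) :
  cayley_embedding (fun i => flow_polytope (fun k => (0 < k <= n.+1)%N) src tgt
                               (netflow R i.+1 n.+1)) xf ->
  [/\ forall i, 0 <= xf.1 i, forall e, 0 <= xf.2 e, \sum_i xf.1 i = 1
    & forall i : 'I_n, dvg xf.2 i.+1 = xf.1 i].
Proof.
case=> m [lam [idx [p [lam_ge0 [sum_lam1 [Pp [xE gE]]]]]]].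
have p_unit j : unit_flow (idx j) (p j) by apply/flow_polytope_unit_flowP.
split=> [i | e | | i].
- by rewrite xE; apply: sumr_ge0 => j _; rewrite mulr_ge0.
- by rewrite gE; apply: sumr_ge0 => j _; rewrite mulr_ge0 ?(p_unit j).1.
- under eq_bigr do rewrite xE; rewrite exchange_big -[RHS]sum_lam1.
  apply: eq_bigr => j _; rewrite /std_basis.
  by under eq_bigr do rewrite mulrC; rewrite sumr_delta.
- rewrite (eq_divergence _ _ _ gE) divergence_lincomb xE.
  by apply: eq_bigr => j _; rewrite (p_unit j).2.
Qed.

End Flows.

Theorem proposition7p2 (R : realFieldType) (n : nat) (E : finType)
  (src tgt : E -> nat)
  (Hsrc : forall e, (1 <= src e)%N)
  (Hlt : forall e, (src e < tgt e)%N)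
  (Htgt : forall e, (tgt e <= n.+1)%N) :
  forall xf : ('I_n -> R) * (E -> R),
    cayley_embedding
      (fun i : 'I_n => flow_polytope (fun k => (1 <= k <= n.+1)%N) src tgt
                         (netflow R (nat_of_ord i).+1 n.+1)) xf
    <->
    flow_polytope (fun k => (k <= n.+1)%N) (star_src src) (star_tgt tgt)
      (netflow R 0 n.+1) (star_coords xf).
Proof.
move=> xf; rewrite (star_flow_polytopeP Hsrc Hlt Htgt).
split; first exact: cayley_embedding_unit_flows.
case=> x_ge0 g_ge0 sum_x1 dvg_g.
have [|p [p_unit gE]] := unit_flow_decomposition_exists Hsrc Hlt Htgt g_ge0.
  by move=> i; rewrite dvg_g.
apply: cayley_embedding_convex (p) x_ge0 sum_x1 _ _ => [i | e].
  by rewrite -dvg_g => /p_unit /(flow_polytope_unit_flowP Hsrc Hlt Htgt).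
by rewrite [LHS]gE; apply: eq_bigr => i _; rewrite dvg_g.
Qed.
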